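(* Let $\lambda_1,\lambda_2,\sigma_1,\sigma_2\in\mathbb{C}^*$ and $\eta_1,\eta_2\in\mathbb{C}$. Then $\Omega(\lambda_1,\eta_1,\sigma_1,0)\otimes\Omega(\lambda_2,\eta_2,0,\sigma_2)$ is an irreducible $\mathcal{G}$-module if and only if $\lambda_1\neq\lambda_2$.
   Context: The planar Galilean conformal algebra $\mathcal{G}$ is the complex Lie algebra with basis $\{L_m,H_m,I_m,J_m\mid m\in\mathbb{Z}\}$ and brackets $[L_m,L_n]=(n-m)L_{m+n}$, $[L_m,H_n]=nH_{m+n}$, $[L_m,I_n]=(n-m)I_{m+n}$, $[L_m,J_n]=(n-m)J_{m+n}$, $[H_m,I_n]=I_{m+n}$, $[H_m,J_n]=-J_{m+n}$, and $[H_m,H_n]=[I_m,I_n]=[J_m,J_n]=[I_m,J_n]=0$ for all $m,n\in\mathbb{Z}$. For $\lambda,\sigma\in\mathbb{C}^*$, $\eta\in\mathbb{C}$, the module $\Omega(\lambda,\eta,\sigma,0)$ is $\mathbb{C}[X,Y]$ with $L_m f(X,Y)=\lambda^m(Y-mX+m\eta)f(X,Y-m)$, $H_m f(X,Y)=\lambda^m X f(X,Y-m)$, $I_m f(X,Y)=\lambda^m\sigma f(X-1,Y-m)$, $J_m f(X,Y)=0$. The module $\Omega(\lambda,\eta,0,\sigma)$ is $\mathbb{C}[S,T]$ with $L_m f(S,T)=\lambda^m(T+mS+m\eta)f(S,T-m)$, $H_m f(S,T)=\lambda^m S f(S,T-m)$, $I_m f(S,T)=0$, $J_m f(S,T)=\lambda^m\sigma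 f(S+1,T-m)$. The tensor product of $\mathcal{G}$-modules has action $x(v\otimes w)=xv\otimes w+v\otimes xw$. *)

From HB Require Import structures.
From mathcomp Require Import all_boot all_algebra.
From mathcomp Require Import reals complex mpoly.
Set Implicit Arguments. Unset Strict Implicit. Unset Printing Implicit Defensive.
Import GRing.Theory Num.Theory.
Local Open Scope ring_scope.

Section GCA.
Variable R : realType.
Local Notation C := R[i].

(* Abstract notion: a G-module structure on a C-vector space V is given by
   the four families of operators L_m, H_m, I_m, J_m (m : int).       *)
Definition gca_submodule (V : lmodType C) (L H I J : int -> V -> V)
    (P : V -> Prop) : Prop :=
  [/\ P 0,
      (forall (a : C) (u v : V), P u -> P v -> P (a *: u + v)),
      (forall m u, P u -> P (L m u)),
      (forall m u, P u -> P (H m u)) &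
      (forall m u, P u -> P (I m u)) /\ (forall m u, P u -> P (J m u))].

Definition gca_irreducible (V : lmodType C) (L H I J : int -> V -> V) : Prop :=
  (exists v : V, v != 0) /\
  forall P : V -> Prop, gca_submodule L H I J P ->
    (forall v, P v -> v = 0) \/ (forall v, P v).

(* The tensor product  Omega(l1,e1,s1,0) (x) Omega(l2,e2,0,s2)
   = C[X,Y] (x) C[S,T], realised as C[X,Y,S,T] = {mpoly C[4]} via
   f(X,Y) (x) g(S,T) |-> f g, with variables
   'X_0 = X, 'X_1 = Y, 'X_2 = S, 'X_3 = T.
   Each factor's operator acts on its own variables (the other variables
   being treated as scalars), and x(v (x) w) = xv (x) w + v (x) xw.        *)
Local Notation P4 := {mpoly C[4]}.

Definition cst (c : C) : P4 := c%:MP.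
Definition zi (m : int) : C := m%:~R.

Definition shift4 (a b c d : C) (F : P4) : P4 :=
  comp_mpoly [tuple 'X_0 + cst a; 'X_1 + cst b; 'X_2 + cst c; 'X_3 + cst d] F.

(* action of Omega(l1, e1, s1, 0) on the X,Y variables *)
Definition L1 (l1 e1 : C) (m : int) (F : P4) : P4 :=
  cst (l1 ^ m) * ('X_1 - cst (zi m) * 'X_0 + cst (zi m * e1))
    * shift4 0 (- zi m) 0 0 F.
Definition H1 (l1 : C) (m : int) (F : P4) : P4 :=
  cst (l1 ^ m) * 'X_0 * shift4 0 (- zi m) 0 0 F.
Definition I1 (l1 s1 : C) (m : int) (F : P4) : P4 :=
  cst (l1 ^ m * s1) * shift4 (-1) (- zi m) 0 0 F.
Definition J1 (m : int) (F : P4) : P4 := 0.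

(* action of Omega(l2, e2, 0, s2) on the S,T variables *)
Definition L2 (l2 e2 : C) (m : int) (F : P4) : P4 :=
  cst (l2 ^ m) * ('X_3 + cst (zi m) * 'X_2 + cst (zi m * e2))
    * shift4 0 0 0 (- zi m) F.
Definition H2 (l2 : C) (m : int) (F : P4) : P4 :=
  cst (l2 ^ m) * 'X_2 * shift4 0 0 0 (- zi m) F.
Definition I2 (m : int) (F : P4) : P4 := 0.
Definition J2 (l2 s2 : C) (m : int) (F : P4) : P4 :=
  cst (l2 ^ m * s2) * shift4 0 0 1 (- zi m) F.

Definition tL (l1 e1 l2 e2 : C) m F := L1 l1 e1 m F + L2 l2 e2 m F.
Definition tH (l1 l2 : C) m F := H1 l1 m F + H2 l2 m F.
Definition tI (l1 s1 : C) m F := I1 l1 s1 m F + I2 m F.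
Definition tJ (l2 s2 : C) m F := J1 m F + J2 l2 s2 m F.

Definition tensor_irreducible (l1 e1 s1 l2 e2 s2 : C) : Prop :=
  gca_irreducible (V := P4) (tL l1 e1 l2 e2) (tH l1 l2) (tI l1 s1) (tJ l2 s2).

End GCA.

(* If l1 = l2, the polynomials depending on Y and T only through Y + T form a
   proper nonzero submodule.
   If l1 <> l2, let P be a nonzero submodule.  Up to nonzero scalars, I_m and J_m
   act by the shifts (X, Y) -> (X - 1, Y - m) and (S, T) -> (S + 1, T - m).  The
   difference of two shifts that differ in one variable lowers the degree and, by
   second-order Taylor expansion, does not vanish on a polynomial whose leading
   monomial contains that variable; descending this way, 1 is in P.  Then induct
   on the degree: for G of degree at most d, H_m G and L_m G agree with
   l1^m XG + l2^m SG and l1^m YG + l2^m TG modulo polynomials already in P, so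
   m = 0, 1 and l1 <> l2 give XG, SG, YG, TG in P. *)

From HB Require Import structures.
From mathcomp Require Import all_boot all_algebra.
From mathcomp Require Import reals complex mpoly.
From mathcomp Require Import ring zify.
From Stdlib Require Import Classical_Prop.
Import GRing.Theory Num.Theory.
Local Open Scope ring_scope.
Set Implicit Arguments. Unset Strict Implicit. Unset Printing Implicit Defensive.

Section Subspace.
Variables (K : fieldType) (V : lmodType K) (P : V -> Prop).
Hypotheses (P0 : P 0) (Plin : forall a u v, P u -> P v -> P (a *: u + v)).

Lemma subspaceZ a u : P u -> P (a *: u).
Proof. by move=> Pu; rewrite -[_ *: _]addr0; apply: Plin. Qed.

Lemma subspaceD u v : P u -> P v -> P (u + v).
Proof. by rewrite -{2}[u]scale1r; apply: Plin. Qed.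

Lemma subspaceB u v : P u -> P v -> P (u - v).
Proof. by move=> Pu Pv; rewrite addrC -scaleN1r; apply: Plin. Qed.

Lemma subspace_split2 a b u w : a != b ->
  P (u + w) -> P (a *: u + b *: w) -> P u /\ P w.
Proof.
rewrite -subr_eq0 => ab Puw Pab.
have Pu : P u.
  have := subspaceZ (a - b)^-1 (subspaceB Pab (subspaceZ b Puw)).
  by rewrite [b *: (u + w)]scalerDr opprD addrACA subrr addr0 -scalerBl scalerA mulVf ?scale1r.
by split; last by rewrite -(addKr u w) addrC; apply: subspaceB.
Qed.

End Subspace.

Section MPolySize.
Variables (K : idomainType) (n : nat).
Implicit Types (p q : {mpoly K[n]}) (m : 'X_{1..n}).

Lemma mdeg_gt0_lep1m m : (0 < mdeg m)%N -> exists i, (U_(i) <= m)%MM.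
Proof.
case: (pickP (fun i => m i != 0%N)) => [i mi _|m0]; first by exists i; rewrite lep1mP.
by rewrite mdegE big1 // => i _; apply/eqP; rewrite -[_ == _]negbK m0.
Qed.

Lemma mpoly_msupp_ind (Q : {mpoly K[n]} -> Prop) p :
  Q 0 -> (forall a q r, Q q -> Q r -> Q (a *: q + r)) ->
  (forall m, m \in msupp p -> Q 'X_[m]) -> Q p.
Proof.
move=> Q0 Qlin QX; rewrite [p]mpolyE big_seq.
apply: (big_ind Q Q0) => [q r Qq Qr|m /QX Qm]; first by rewrite -[q]scale1r; apply: Qlin.
by rewrite -[_ *: _]addr0; apply: Qlin.
Qed.

Lemma msize_add_le k p q : (msize p <= k)%N -> (msize q <= k)%N -> (msize (p + q) <= k)%N.
Proof. by move=> pk qk; apply: leq_trans (msizeD_le _ _) _; rewrite geq_max pk. Qed.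

Lemma msize_mul_le a b p q :
  (msize p <= a.+1)%N -> (msize q <= b)%N -> (msize (p * q) <= a + b)%N.
Proof.
have [->|p0] := eqVneq p 0; first by rewrite mul0r msize0.
have [->|q0] := eqVneq q 0; first by rewrite mulr0 msize0.
by rewrite msizeM //; lia.
Qed.

Lemma msize_mulX i q : msize ('X_i * q) = if q == 0 then 0%N else (msize q).+1.
Proof.
have [->|q0] := eqVneq q 0; first by rewrite mulr0 msize0.
have X0 : 'X_i != 0 :> {mpoly K[n]} by rewrite -msize_poly_eq0 msizeX.
by rewrite msizeM // msizeX mdeg1.
Qed.

Lemma msize_mulC_le c q : (msize (c%:MP * q) <= msize q)%N.
Proof. by rewrite mul_mpolyC msizeZ_le. Qed.

Lemma msize_mulCX_le c i : (msize (c%:MP * 'X_i : {mpoly K[n]}) <= 2)%N.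
Proof. by apply: leq_trans (msize_mulC_le _ _) _; rewrite msizeX mdeg1. Qed.

End MPolySize.

Section MPolyShift.
Variables (K : idomainType) (n : nat).
Implicit Types (p q : {mpoly K[n]}) (v w : 'I_n -> K) (m : 'X_{1..n}).

Definition mshift v p := p \mPo [tuple 'X_i + (v i)%:MP | i < n].

Definition mdirderiv v p := \sum_i v i *: p^`M(i).

Lemma mshiftXU v i : mshift v 'X_i = 'X_i + (v i)%:MP.
Proof. by rewrite /mshift comp_mpolyXU -tnth_nth tnth_map tnth_ord_tuple. Qed.

Lemma mshift_lin v a p q : mshift v (a *: p + q) = a *: mshift v p + mshift v q.
Proof. by rewrite /mshift comp_mpolyD comp_mpolyZ. Qed.

Lemma mshiftM v p q : mshift v (p * q) = mshift v p * mshift v q.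
Proof. exact: rmorphM. Qed.

Lemma mshift1 v : mshift v 1 = 1.
Proof. exact: rmorph1. Qed.

Lemma mshift0 p : mshift (fun _ => 0) p = p.
Proof.
rewrite /mshift -[RHS](comp_mpoly_id p); congr comp_mpoly.
by apply: eq_from_tnth => i; rewrite !tnth_map addr0.
Qed.

Lemma meval_mshift v (x : 'I_n -> K) p : (mshift v p).@[x] = p.@[fun i => x i + v i].
Proof.
rewrite /mshift comp_mpoly_meval; apply: meval_eq => i.
by rewrite tnth_map tnth_ord_tuple mevalD mevalXU mevalC.
Qed.

Lemma mdirderiv_lin v a p q :
  mdirderiv v (a *: p + q) = a *: mdirderiv v p + mdirderiv v q.
Proof.
rewrite /mdirderiv scaler_sumr -big_split /=; apply: eq_bigr => i _.
by rewrite mderivD mderivZ scalerDr !scalerA mulrC.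
Qed.

Lemma mdirderivM v p q : mdirderiv v (p * q) = mdirderiv v p * q + p * mdirderiv v q.
Proof.
rewrite /mdirderiv mulr_suml mulr_sumr -big_split /=; apply: eq_bigr => i _.
by rewrite mderivM scalerDr -scalerAl -scalerAr.
Qed.

Lemma mdirderiv1 v : mdirderiv v 1 = 0.
Proof. by rewrite /mdirderiv big1 // => i _; rewrite -mpolyC1 mderivC scaler0. Qed.

Lemma mdirderivXU v i : mdirderiv v 'X_i = (v i)%:MP.
Proof.
rewrite /mdirderiv (bigD1 i) //= big1 => [|j ji]; last first.
  by rewrite mderivX mnm1E eq_sym (negbTE ji) scale0r scaler0.
rewrite mderivX mnm1E eqxx.
have -> : (U_(i) - U_(i) = 0)%MM by rewrite -[X in (X - _)%MM]add0m addmK.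
by rewrite mpolyX0 scale1r addr0 -mul_mpolyC mulr1.
Qed.

Lemma mdirderivB v w p :
  mdirderiv v p - mdirderiv w p = \sum_i (v i - w i) *: p^`M(i).
Proof. by rewrite /mdirderiv -sumrB; apply: eq_bigr => i _; rewrite scalerBl. Qed.

Section Taylor.
Variable v : 'I_n -> K.
Local Notation diff1 p := (mshift v p - p).
Local Notation rem2 p := (mshift v p - p - mdirderiv v p).

Lemma mshift_sub_lin a p q : diff1 (a *: p + q) = a *: diff1 p + diff1 q.
Proof. by rewrite mshift_lin opprD addrACA -scalerBr. Qed.

Lemma taylor_rem_lin a p q : rem2 (a *: p + q) = a *: rem2 p + rem2 q.
Proof. by rewrite mshift_sub_lin mdirderiv_lin opprD addrACA -scalerBr. Qed.

Lemma msize_mshift_taylor_mpolyX m :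
  (msize (diff1 'X_[m]) <= mdeg m)%N /\ (msize (rem2 'X_[m]) <= (mdeg m).-1)%N.
Proof.
move: {2}(mdeg m) (erefl (mdeg m)) => d; elim: d m => [|d IH] m dm.
  move/eqP: dm; rewrite mdeg_eq0 => /eqP ->.
  by rewrite mpolyX0 mshift1 mdirderiv1 !subrr msize0.
have [i /submK mE] : exists i, (U_(i) <= m)%MM by apply: mdeg_gt0_lep1m; rewrite dm.
have dm' : mdeg (m - U_(i))%MM = d by move: dm; rewrite -{1}mE mdegD mdeg1 addn1 => -[].
have [] := IH _ dm'; rewrite dm dm' => IH1 IH2; rewrite -mE mpolyXD.
set G := 'X_[_]; pose c : {mpoly K[n]} := (v i)%:MP.
have szG : msize G = d.+1 by rewrite msizeX dm'.
have diff1E : diff1 (G * 'X_i) = 'X_i * diff1 G + c * G + c * diff1 G.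
  by rewrite mshiftM mshiftXU -/c; move: (mshift v G) => S; ring.
have rem2E : rem2 (G * 'X_i) = 'X_i * rem2 G + c * diff1 G.
  rewrite mshiftM mshiftXU mdirderivM mdirderivXU.
  by move: (mshift v G) (mdirderiv v G) => S DG; rewrite -/c; ring.
split; [rewrite diff1E | rewrite rem2E].
- apply: msize_add_le; first apply: msize_add_le.
  + by rewrite msize_mulX; case: eqP.
  + by rewrite -szG msize_mulC_le.
  + exact: leq_trans (msize_mulC_le _ _) (leq_trans IH1 (leqnSn _)).
- apply: msize_add_le; last exact: leq_trans (msize_mulC_le _ _) IH1.
  rewrite msize_mulX; case: eqP => // /eqP; rewrite -msize_poly_eq0 -lt0n => pos.
  by case: d {IH dm dm' szG diff1E rem2E IH1} IH2 => [|d] IH2; [move: (leq_trans pos IH2) | rewrite ltnS].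
Qed.

Lemma msize_mshift_taylor p :
  (msize (diff1 p) <= (msize p).-1)%N /\ (msize (rem2 p) <= (msize p).-2)%N.
Proof.
have : forall m, m \in msupp p -> (mdeg m < msize p)%N by move=> m; apply: msize_mdeg_lt.
move: (msize p) => k mp.
apply: (@mpoly_msupp_ind _ _
  (fun q => msize (diff1 q) <= k.-1 /\ msize (rem2 q) <= k.-2)%N p)
  => [|a q r [q1 q2] [r1 r2]|m /mp mk].
- rewrite /mshift comp_mpoly0 /mdirderiv big1 => [|i _]; last by rewrite mderiv0 scaler0.
  by rewrite !subr0 msize0.
- split; [rewrite mshift_sub_lin | rewrite taylor_rem_lin];
    by apply: msize_add_le => //; apply: leq_trans (msizeZ_le _ _) _.
- have [X1 X2] := msize_mshift_taylor_mpolyX m.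
  by split; [apply: leq_trans X1 _ | apply: leq_trans X2 _]; lia.
Qed.

End Taylor.

Lemma mdirderiv_delta v w i eps p : (forall j, v j = w j + eps *+ (j == i)) ->
  mdirderiv v p - mdirderiv w p = eps *: p^`M(i).
Proof.
move=> vw; rewrite mdirderivB (bigD1 i) //= big1 => [|j ji]; last first.
  by rewrite vw addrAC subrr add0r (negbTE ji) scale0r.
by rewrite vw addrAC subrr add0r eqxx addr0.
Qed.

Lemma msize_mshift_diff v w p :
  (msize (mshift v p - mshift w p) <= (msize p).-1)%N.
Proof.
have [v1 _] := msize_mshift_taylor v p; have [w1 _] := msize_mshift_taylor w p.
have -> : mshift v p - mshift w p = (mshift v p - p) - (mshift w p - p).
  by rewrite opprB addrA subrK.
by apply: msize_add_le; rewrite ?msizeN.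
Qed.

Lemma msize_mshift_diff_deriv v w i eps p : (forall j, v j = w j + eps *+ (j == i)) ->
  (msize (mshift v p - mshift w p - eps *: p^`M(i)) <= (msize p).-2)%N.
Proof.
move=> /mdirderiv_delta <-.
have [_ v2] := msize_mshift_taylor v p; have [_ w2] := msize_mshift_taylor w p.
have -> : mshift v p - mshift w p - (mdirderiv v p - mdirderiv w p) =
  (mshift v p - p - mdirderiv v p) - (mshift w p - p - mdirderiv w p).
  by move: (mshift v p) (mshift w p) (mdirderiv v p) (mdirderiv w p) => ????; ring.
by apply: msize_add_le; rewrite ?msizeN.
Qed.

Lemma msize_affine_mul_mshift_sub v d (A G : {mpoly K[n]}) :
  (msize A <= 2)%N -> (msize G <= d.+1)%N -> (msize (A * (mshift v G - G)) <= d.+1)%N.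
Proof.
move=> szA szG; apply: msize_mul_le szA _.
have [diffG _] := msize_mshift_taylor v G; apply: leq_trans diffG _.
by case: (msize G) szG.
Qed.

End MPolyShift.

Section ShiftDescent.
Variables (K : numFieldType) (n : nat).
Implicit Types (p q : {mpoly K[n]}) (v w : 'I_n -> K).

Lemma msize_mderiv_mlead i p : (0 < mlead p i)%N -> ((msize p).-1 <= msize p^`M(i))%N.
Proof.
move=> ipos; have p0 : p != 0 by apply: contraTneq ipos => ->; rewrite mlead0 mnm0E.
have /submK mE : (U_(i) <= mlead p)%MM by rewrite lep1mP -lt0n.
have : (mlead p - U_(i))%MM \in msupp p^`M(i).
  by rewrite mcoeff_msupp mcoeff_mderiv mE mulrn_eq0 negb_or mleadc_eq0 p0.
have := congr1 mdeg mE; rewrite mdegD mdeg1 -(mlead_deg p0) => <-.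
by rewrite addn1 => /msize_mdeg_lt.
Qed.

Lemma mshift_diff_neq0 v w i eps p : eps != 0 -> (forall j, v j = w j + eps *+ (j == i)) ->
  (0 < mlead p i)%N -> mshift v p - mshift w p != 0.
Proof.
move=> e0 vw ipos; apply/eqP => diff0.
have p0 : p != 0 by apply: contraTneq ipos => ->; rewrite mlead0 mnm0E.
have d0 : (0 < mdeg (mlead p))%N.
  by rewrite lt0n mdeg_eq0; apply: contraTneq ipos => ->; rewrite mnm0E.
have := msize_mshift_diff_deriv p vw; rewrite diff0 sub0r msizeN msizeZ //.
move/(leq_trans (msize_mderiv_mlead ipos)); rewrite -(mlead_deg p0).
by case: (mdeg (mlead p)) d0 => // d _; rewrite /= ltnn.
Qed.

Section SubspaceOfMPoly.
Variable P : {mpoly K[n]} -> Prop.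
Hypotheses (P0 : P 0) (Plin : forall a p q, P p -> P q -> P (a *: p + q)).

Lemma subspace_mshift_one
  (shift_pairs : forall i, exists v w, exists2 eps, eps != 0 &
     [/\ forall j, v j = w j + eps *+ (j == i),
         forall p, P p -> P (mshift v p) & forall p, P p -> P (mshift w p)])
  p : P p -> p != 0 -> P 1.
Proof.
have [k] := ubnP (msize p); elim: k p => // k IH p szp Pp p0.
have [/msize1_polyC pE | sz2] := leqP (msize p) 1.
  have c0 : p@_0 != 0 by apply: contra p0; rewrite {2}pE => /eqP ->.
  have := subspaceZ P0 Plin (p@_0)^-1 Pp.
  by rewrite {2}pE -mul_mpolyC -mpolyCM mulVf.
have p0' : (0 < mdeg (mlead p))%N by rewrite -ltnS (mlead_deg p0).
have [i ipos] : exists i, (0 < mlead p i)%N.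
  by have [i iU] := mdeg_gt0_lep1m p0'; exists i; rewrite lt0n -lep1mP.
have [v [w [eps e0 [vw Pv Pw]]]] := shift_pairs i.
apply: (IH (mshift v p - mshift w p)).
- by apply: leq_ltn_trans (msize_mshift_diff _ _ _) _; rewrite -ltnS prednK // ltnW.
- by apply: (subspaceB Plin); [apply: Pv | apply: Pw].
- exact: (mshift_diff_neq0 e0 vw ipos).
Qed.

Lemma subspace_mpoly_full (P1 : P 1)
  (mulX_closed : forall d, (forall q, msize q <= d.+1 -> P q)%N ->
     forall i q, (msize q <= d.+1)%N -> P ('X_i * q)) :
  forall p, P p.
Proof.
suff Pd d p : (msize p <= d.+1)%N -> P p by move=> p; apply: (Pd (msize p)).
elim: d p => [|d IH] p szp.
  by rewrite (msize1_polyC szp) -[_%:MP]mulr1 mul_mpolyC; apply: subspaceZ.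
apply: mpoly_msupp_ind => // m /msize_mdeg_lt mp.
have [/eqP|m0] := posnP (mdeg m); first by rewrite mdeg_eq0 => /eqP ->; rewrite mpolyX0.
have [i /submK mE] := mdeg_gt0_lep1m m0.
rewrite -mE mpolyXD mulrC; apply: (mulX_closed _ IH).
rewrite msizeX -ltnS; move: mp; rewrite -{1}mE mdegD mdeg1 addn1 => /leq_trans; exact.
Qed.

End SubspaceOfMPoly.

End ShiftDescent.

Section TensorModule.
Variable R : realType.
Local Notation C := R[i].
Local Notation P4 := {mpoly C[4]}.
Local Notation zi := (zi R).

Definition vec4 (a b c d : C) : 'I_4 -> C := fun i => [:: a; b; c; d]`_i.

Lemma ord4P (i : 'I_4) : [\/ i = 0, i = 1, i = 2 | i = 3].
Proof.
by case: i => [[|[|[|[|//]]]] ?]; [apply: Or41 | apply: Or42 | apply: Or43 | apply: Or44];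
  apply: val_inj.
Qed.

Lemma shift4E a b c d : shift4 a b c d = mshift (vec4 a b c d).
Proof.
rewrite /shift4 /mshift /cst; congr comp_mpoly; apply: eq_from_tnth => i.
by rewrite tnth_map tnth_ord_tuple; case: (ord4P i) => ->.
Qed.

Lemma zi0 : zi 0 = 0. Proof. exact: mulr0z. Qed.
Lemma zi1 : zi 1 = 1. Proof. exact: mulr1z. Qed.

Section Irreducible.
Variables (l1 l2 s1 s2 e1 e2 : C).
Hypotheses (l1_neq0 : l1 != 0) (l2_neq0 : l2 != 0) (s1_neq0 : s1 != 0) (s2_neq0 : s2 != 0).
Hypothesis l1_neq_l2 : l1 != l2.
Variable P : P4 -> Prop.
Hypothesis sub : gca_submodule (tL l1 e1 l2 e2) (tH l1 l2) (tI l1 s1) (tJ l2 s2) P.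

Let P0 : P 0. Proof. by case: sub. Qed.
Let Plin a F G : P F -> P G -> P (a *: F + G). Proof. by case: sub => _ /(_ a F G). Qed.

Lemma sub_mulC c F : P F -> P (cst c * F).
Proof. by rewrite /cst mul_mpolyC; apply: subspaceZ. Qed.

Lemma sub_mulC_inv c F : c != 0 -> P (cst c * F) -> P F.
Proof.
by move=> c0 /(sub_mulC c^-1); rewrite /cst mulrA -mpolyCM mulVf // mul1r.
Qed.

Lemma sub_shiftI m F : P F -> P (mshift (vec4 (-1) (- zi m) 0 0) F).
Proof.
case: sub => _ _ _ _ [PI _] /(PI m); rewrite /tI /I1 /I2 addr0 shift4E.
by apply: sub_mulC_inv; rewrite mulf_neq0 // expfz_neq0.
Qed.

Lemma sub_shiftJ m F : P F -> P (mshift (vec4 0 0 1 (- zi m)) F).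
Proof.
case: sub => _ _ _ _ [_ PJ] /(PJ m); rewrite /tJ /J1 /J2 add0r shift4E.
by apply: sub_mulC_inv; rewrite mulf_neq0 // expfz_neq0.
Qed.

Lemma sub_one F : P F -> F != 0 -> P 1.
Proof.
apply: subspace_mshift_one P0 Plin _ F => i.
have P_id F : P F -> P (mshift (fun _ => 0) F) by rewrite mshift0.
case: (ord4P i) => ->.
- exists (vec4 (-1) (- zi 0) 0 0), (fun _ => 0), (-1); first by rewrite oppr_eq0 oner_eq0.
  split=> [j||]; [|exact: sub_shiftI|exact: P_id].
  by case: (ord4P j) => ->; rewrite /vec4 /= ?zi0 ?oppr0 ?mulr1n ?mulr0n ?add0r ?addr0.
- exists (vec4 (-1) (- zi 1) 0 0), (vec4 (-1) (- zi 0) 0 0), (-1).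
    by rewrite oppr_eq0 oner_eq0.
  split=> [j||]; [|exact: sub_shiftI|exact: sub_shiftI].
  by case: (ord4P j) => ->; rewrite /vec4 /= ?zi0 ?zi1 ?oppr0 ?mulr1n ?mulr0n ?add0r ?addr0.
- exists (vec4 0 0 1 (- zi 0)), (fun _ => 0), 1; first by rewrite oner_eq0.
  split=> [j||]; [|exact: sub_shiftJ|exact: P_id].
  by case: (ord4P j) => ->; rewrite /vec4 /= ?zi0 ?oppr0 ?mulr1n ?mulr0n ?add0r ?addr0.
- exists (vec4 0 0 1 (- zi 1)), (vec4 0 0 1 (- zi 0)), (-1).
    by rewrite oppr_eq0 oner_eq0.
  split=> [j||]; [|exact: sub_shiftJ|exact: sub_shiftJ].
  by case: (ord4P j) => ->; rewrite /vec4 /= ?zi0 ?zi1 ?oppr0 ?mulr1n ?mulr0n ?add0r ?addr0.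
Qed.

Section DegreeStep.
Variable d : nat.
Hypothesis Pd : forall G, (msize G <= d.+1)%N -> P G.

Lemma sub_mulXS G : (msize G <= d.+1)%N -> P ('X_0 * G) /\ P ('X_2 * G).
Proof.
move=> szG.
have PH m : P (l1 ^ m *: ('X_0 * G) + l2 ^ m *: ('X_2 * G)).
  case: sub => _ _ _ /(_ m G (Pd szG)) + _; rewrite /tH /H1 /H2 => PHG.
  set S1 := shift4 _ _ _ _ G in PHG; set S2 := shift4 _ _ _ _ G in PHG.
  have Perr : P (cst (l1 ^ m) * 'X_0 * (S1 - G) + cst (l2 ^ m) * 'X_2 * (S2 - G)).
    by apply: Pd; apply: msize_add_le; rewrite /S1 /S2 shift4E;
      apply: msize_affine_mul_mshift_sub => //; apply: msize_mulCX_le.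
  have := subspaceB Plin PHG Perr; rewrite -!mul_mpolyC.
  by move=> PE; apply: eq_ind PE _ _; rewrite /cst; clearbody S1 S2; ring.
have := PH 0; have := PH 1; rewrite !expr0z !expr1z !scale1r => P1 P0'.
exact: (subspace_split2 P0 Plin l1_neq_l2 P0' P1).
Qed.

Lemma sub_mulYT G : (msize G <= d.+1)%N -> P ('X_1 * G) /\ P ('X_3 * G).
Proof.
move=> szG; have PG := Pd szG; have [PX0 PX2] := sub_mulXS szG.
have PL m : P (l1 ^ m *: ('X_1 * G) + l2 ^ m *: ('X_3 * G)).
  case: sub => _ _ /(_ m G PG) + _ _; rewrite /tL /L1 /L2 => PLG.
  set S1 := shift4 _ _ _ _ G in PLG; set S2 := shift4 _ _ _ _ G in PLG.
  set A1 := ('X_1 - _ + _) in PLG; set A2 := ('X_3 + _ + _) in PLG.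
  have szA c (A : P4) : (msize A <= 2)%N -> (msize (cst c * A) <= 2)%N.
    exact: leq_trans (msize_mulC_le _ _).
  have szC c : (msize (cst c : P4) <= 2)%N by rewrite /cst msizeC; case: (c != 0).
  have Perr : P (cst (l1 ^ m) * A1 * (S1 - G) + cst (l2 ^ m) * A2 * (S2 - G)).
    apply: Pd; apply: msize_add_le; rewrite /S1 /S2 shift4E;
      apply: msize_affine_mul_mshift_sub => //; rewrite /A1 /A2; apply: szA;
      do 2 (apply: msize_add_le => //); rewrite ?msizeN ?msizeX ?mdeg1 //;
      exact: msize_mulCX_le.
  (* L_m G - Perr is l1^m A1 G + l2^m A2 G; Pcorr collects its X G, S G and G terms. *)
  have Pcorr : P (cst (l1 ^ m) * (cst (zi m) * ('X_0 * G)) - cst (l1 ^ m) * (cst (zi m * e1) * G)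
      - (cst (l2 ^ m) * (cst (zi m) * ('X_2 * G)) + cst (l2 ^ m) * (cst (zi m * e2) * G))).
    by apply: (subspaceB Plin); [apply: (subspaceB Plin) | apply: (subspaceD Plin)];
      do ?apply: sub_mulC.
  have := subspaceD Plin (subspaceB Plin PLG Perr) Pcorr; rewrite -!mul_mpolyC.
  move=> PE; apply: eq_ind PE _ _; rewrite /A1 /A2 /cst; clear PLG Perr; clearbody S1 S2; ring.
have := PL 0; have := PL 1; rewrite !expr0z !expr1z !scale1r => P1 P0'.
exact: (subspace_split2 P0 Plin l1_neq_l2 P0' P1).
Qed.

Lemma sub_mulX i G : (msize G <= d.+1)%N -> P ('X_i * G).
Proof.
move=> szG; have [PX0 PX2] := sub_mulXS szG; have [PX1 PX3] := sub_mulYT szG.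
by case: (ord4P i) => ->.
Qed.

End DegreeStep.

Lemma tensor_sub_full F : P F -> F != 0 -> forall G, P G.
Proof.
move=> PF F0; apply: subspace_mpoly_full P0 Plin (sub_one PF F0) _.
by move=> d Pd i G; apply: sub_mulX.
Qed.

End Irreducible.

Lemma meval_shift4 a b c d x y s t (F : P4) :
  (shift4 a b c d F).@[vec4 x y s t] = F.@[vec4 (x + a) (y + b) (s + c) (t + d)].
Proof.
by rewrite shift4E meval_mshift; apply: meval_eq => i; case: (ord4P i) => ->.
Qed.

Lemma meval_cst_mul_shift4 c (A F : P4) a b c' d x y s t :
  (cst c * A * shift4 a b c' d F).@[vec4 x y s t] =
  c * A.@[vec4 x y s t] * F.@[vec4 (x + a) (y + b) (s + c') (t + d)].
Proof. by rewrite !mevalM meval_shift4 /cst mevalC. Qed.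

Lemma meval_cst_mul_shift4D c1 c2 (A1 A2 F : P4) a1 b1 c1' d1 a2 b2 c2' d2 x y s t :
  (cst c1 * A1 * shift4 a1 b1 c1' d1 F + cst c2 * A2 * shift4 a2 b2 c2' d2 F).@[vec4 x y s t] =
  c1 * A1.@[vec4 x y s t] * F.@[vec4 (x + a1) (y + b1) (s + c1') (t + d1)] +
  c2 * A2.@[vec4 x y s t] * F.@[vec4 (x + a2) (y + b2) (s + c2') (t + d2)].
Proof.
(* An unlocated rewrite would compare distinct polynomials up to conversion,
   which is prohibitively slow. *)
by rewrite mevalD [X in X + _]meval_cst_mul_shift4 [X in _ + X]meval_cst_mul_shift4.
Qed.

Lemma meval_cst_shift4 c (F : P4) a b c' d x y s t :
  (cst c * shift4 a b c' d F).@[vec4 x y s t] =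
  c * F.@[vec4 (x + a) (y + b) (s + c') (t + d)].
Proof. by rewrite mevalM meval_shift4 /cst mevalC. Qed.

Definition YT_sum_dependent (F : P4) :=
  forall x y s t, F.@[vec4 x y s t] = F.@[vec4 x (y + t) s 0].

Lemma YT_sum_dependent_submodule l e1 s1 e2 s2 :
  gca_submodule (tL l e1 l e2) (tH l l) (tI l s1) (tJ l s2) YT_sum_dependent.
Proof.
split; [by move=> *; rewrite !meval0 | | | | split].
- by move=> a F G HF HG x y s t; rewrite !(mevalD, mevalZ) HF HG; reflexivity.
all: move=> m F HF x y s t; pose Fc x0 u s0 := F.@[vec4 x0 u s0 0].
all: have HF' x0 y0 s0 t0 : F.@[vec4 x0 y0 s0 t0] = Fc x0 (y0 + t0) s0 by apply: HF.
all: clearbody Fc.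
- rewrite /tL /L1 /L2 !meval_cst_mul_shift4D !HF'.
  rewrite !(mevalD, mevalN, mevalM, mevalC, mevalXU) /vec4 /=.
  by rewrite !addr0 !add0r [y - _ + t]addrAC !addrA; ring.
- rewrite /tH /H1 /H2 !meval_cst_mul_shift4D !HF' !mevalXU /vec4 /=.
  by rewrite !addr0 !add0r [y - _ + t]addrAC !addrA; reflexivity.
- rewrite /tI /I1 /I2 !addr0 !meval_cst_shift4 !HF' !addr0 [y - _ + t]addrAC.
  reflexivity.
- rewrite /tJ /J1 /J2 !add0r !meval_cst_shift4 !HF' !addr0 !add0r !addrA.
  reflexivity.
Qed.

Lemma tensor_not_irreducible l e1 s1 e2 s2 : ~ tensor_irreducible (R := R) l e1 s1 l e2 s2.
Proof.
case=> _ /(_ _ (YT_sum_dependent_submodule l e1 s1 e2 s2)) [N0 | Nall].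
  suff /N0/eqP : YT_sum_dependent 1 by rewrite oner_eq0.
  by move=> *; rewrite !meval1.
by have /eqP := Nall 'X_1 0 0 0 1; rewrite !mevalXU /= add0r eq_sym oner_eq0.
Qed.

End TensorModule.

Theorem theorem3p4 (R : realType) (l1 l2 s1 s2 e1 e2 : R[i]) :
  l1 != 0 -> l2 != 0 -> s1 != 0 -> s2 != 0 ->
  (tensor_irreducible l1 e1 s1 l2 e2 s2 <-> l1 != l2).
Proof.
move=> l1_neq0 l2_neq0 s1_neq0 s2_neq0; split.
  by apply: contraPneq => ->; apply: tensor_not_irreducible.
move=> l1_neq_l2; split; first by exists 1; rewrite oner_neq0.
move=> P sub; have [[F [PF F0]] | P_trivial] := classic (exists F, P F /\ F != 0).
  by right; apply: (tensor_sub_full l1_neq0 l2_neq0 s1_neq0 s2_neq0 l1_neq_l2 sub PF F0).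
left=> F PF; case: (eqVneq F 0) => // F0.
by case: P_trivial; exists F.
Qed.
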